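(* Let $V,W$ be Banach spaces, $T>0$, $\alpha\in(\tfrac14,\tfrac13]$, $F\in\mathcal C^4_b(V,W)$ and $(X,\mathbb A,\mathbb B)$ an $\alpha$-Hölder step-3 reduced rough path on $[0,T]$. Suppose there is a constant $C$ with $|[\mathbb X]_{s,t}|\le C|t-s|^{3\alpha}$ and $|[\mathbb{XX}]_{s,t}|\le C|t-s|^{3\alpha}$ for all $s,t\in[0,T]$. Then for every $t\in[0,T]$ the limit $$\int_0^tDF(X_r)\,dX_r:=\lim_{|\pi|\to0}\sum_{[t_i,t_{i+1}]\in\pi}\Big(DF(X_{t_i})X_{t_i,t_{i+1}}+D^2F(X_{t_i})\mathbb A_{t_i,t_{i+1}}+D^3F(X_{t_i})\mathbb B_{t_i,t_{i+1}}\Big)$$ exists in $W$ (and does not depend on the choice of partitions $\pi$ of $[0,t]$ with mesh $|\pi|\to0$).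
   Context: Tensor powers $V^{\otimes n}$ are equipped with a tensor norm (e.g. the completed projective norm) with $|a\otimes b|\le|a||b|$, so that the $i$-th Fréchet derivative $D^iF(x)$ is identified with a bounded linear map $V^{\otimes i}\to W$. $\mathcal C^k_b(V,W)$ is the set of $k$ times continuously Fréchet differentiable $F:V\to W$ with $\|D^iF\|_\infty<\infty$ for $i=0,\dots,k$. For a path $X:[0,T]\to V$ write $X_{s,t}:=X_t-X_s$. The symmetrization operator is $\mathrm{Sym}:V^{\otimes n}\to V^{\otimes n}$, $\mathrm{Sym}(T)=\frac1{n!}\sum_{\sigma\in S_n}\sigma\cdot T$ (permutation of tensor factors); $\mathrm{Sym}(V^{\otimes n})$ denotes its image (symmetric tensors). An $\alpha$-Hölder step-3 reduced rough path is a triple $(X,\mathbb A,\mathbb B)$ with $X:[0,T]\to V$, $\mathbb A:[0,T]^2\to\mathrm{Sym}(V^{\otimes2})$, $\mathbb B:[0,T]^2\to\mathrm{Sym}(V^{\otimes3})$ such that for all $s,u,t\in[0,T]$: (i) $\mathbb A_{s,t}-\mathbb A_{s,u}-\mathbb A_{u,t}=\mathrm{Sym}(X_{s,u}\otimes X_{u,t})$ and $\mathbb B_{s,t}-\mathbb B_{s,u}-\mathbb B_{u,t}=\mathrm{Sym}(X_{s,u}\otimes\mathbb A_{u,t}+\mathbb A_{s,u}\otimes X_{u,t})$; (ii) $|X_{s,t}|=O(|t-s|^{\alpha})$, $|\mathbb A_{s,t}|=O(|t-s|^{2\alpha})$, $|\mathbb B_{s,t}|=O(|t-s|^{3\alpha})$.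 The brackets are $[\mathbb X]_{s,t}:=X_{s,t}^{\otimes2}-2\mathbb A_{s,t}\in V^{\otimes 2}$ and $[\mathbb{XX}]_{s,t}:=X_{s,t}^{\otimes3}-6\mathbb B_{s,t}\in V^{\otimes 3}$. *)

From HB Require Import structures.
From mathcomp Require Import all_boot all_order all_algebra.
From mathcomp Require Import all_classical all_reals all_analysis.
Import Order.TTheory GRing.Theory Num.Theory.
Import numFieldNormedType.Exports.
Set Implicit Arguments.
Unset Strict Implicit.
Unset Printing Implicit Defensive.
Local Open Scope ring_scope.

Section Defs.
Variable R : realType.

Definition is_lin (U Z : normedModType R) (f : U -> Z) : Prop :=
  forall (a : R) (u v : U), f (a *: u + v) = a *: f u + f v.

Definition is_bilin (U1 U2 Z : normedModType R) (m : U1 -> U2 -> Z) : Prop :=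
  (forall a, is_lin (m a)) /\ (forall b, is_lin (fun a => m a b)).

Definition is_trilin (U Z : normedModType R) (m : U -> U -> U -> Z) : Prop :=
  (forall b c, is_lin (fun a => m a b c)) /\ (forall a c, is_lin (fun b => m a b c))
  /\ (forall a b, is_lin (m a b)).

Definition is_quadrilin (U Z : normedModType R) (m : U -> U -> U -> U -> Z) : Prop :=
  (forall b c d, is_lin (fun a => m a b c d)) /\ (forall a c d, is_lin (fun b => m a b c d))
  /\ (forall a b d, is_lin (fun c => m a b c d)) /\ (forall a b c, is_lin (m a b c)).

(** [V2] with [t2 : V -> V -> V2] is the completed projective tensor product
    V (x) V, characterised by its universal property among Banach spaces:
    [t2] is bilinear with |a (x) b| <= |a||b|, every bounded bilinear map into a
    Banach space W factors through a linear map of the same bound, and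
    continuous linear maps out of V2 are determined by their values on
    elementary tensors (density of the algebraic tensor product). *)
Definition proj_tensor2 (V V2 : normedModType R) (t2 : V -> V -> V2) : Prop :=
  [/\ is_bilin t2,
      (forall a b, `|t2 a b| <= `|a| * `|b|),
      (forall (W : completeNormedModType R) (m : V -> V -> W) (M : R),
          0 <= M -> is_bilin m -> (forall a b, `|m a b| <= M * `|a| * `|b|) ->
          exists L : V2 -> W, [/\ is_lin L, (forall p, `|L p| <= M * `|p|) &
                                 forall a b, L (t2 a b) = m a b]) &
      (forall (W : completeNormedModType R) (L L' : V2 -> W),
          is_lin L -> is_lin L' -> continuous L -> continuous L' ->
          (forall a b, L (t2 a b) = L' (t2 a b)) -> L = L')].

Definition proj_tensor3 (V V3 : normedModType R) (t3 : V -> V -> V -> V3) : Prop :=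
  [/\ is_trilin t3,
      (forall a b c, `|t3 a b c| <= `|a| * `|b| * `|c|),
      (forall (W : completeNormedModType R) (m : V -> V -> V -> W) (M : R),
          0 <= M -> is_trilin m ->
          (forall a b c, `|m a b c| <= M * `|a| * `|b| * `|c|) ->
          exists L : V3 -> W, [/\ is_lin L, (forall p, `|L p| <= M * `|p|) &
                                 forall a b c, L (t3 a b c) = m a b c]) &
      (forall (W : completeNormedModType R) (L L' : V3 -> W),
          is_lin L -> is_lin L' -> continuous L -> continuous L' ->
          (forall a b c, L (t3 a b c) = L' (t3 a b c)) -> L = L')].

(** Fréchet differentiability, in operator norm, of maps with values in
    bounded k-linear maps (given in curried form; the new direction comes first). *)
Definition frechet0 (V W : normedModType R) (F : V -> W) (D : V -> V -> W) : Prop :=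
  forall x (e : R), 0 < e -> exists d : R, 0 < d /\
    forall h, `|h| < d -> `|F (x + h) - F x - D x h| <= e * `|h|.

Definition frechet1 (V W : normedModType R) (F : V -> V -> W) (D : V -> V -> V -> W) : Prop :=
  forall x (e : R), 0 < e -> exists d : R, 0 < d /\
    forall h a, `|h| < d -> `|F (x + h) a - F x a - D x h a| <= e * `|h| * `|a|.

Definition frechet2 (V W : normedModType R) (F : V -> V -> V -> W)
    (D : V -> V -> V -> V -> W) : Prop :=
  forall x (e : R), 0 < e -> exists d : R, 0 < d /\
    forall h a b, `|h| < d ->
      `|F (x + h) a b - F x a b - D x h a b| <= e * `|h| * `|a| * `|b|.

Definition frechet3 (V W : normedModType R) (F : V -> V -> V -> V -> W)
    (D : V -> V -> V -> V -> V -> W) : Prop :=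
  forall x (e : R), 0 < e -> exists d : R, 0 < d /\
    forall h a b c, `|h| < d ->
      `|F (x + h) a b c - F x a b c - D x h a b c| <= e * `|h| * `|a| * `|b| * `|c|.

Definition opcont4 (V W : normedModType R) (D : V -> V -> V -> V -> V -> W) : Prop :=
  forall x (e : R), 0 < e -> exists d : R, 0 < d /\
    forall y a b c f, `|y - x| < d ->
      `|D y a b c f - D x a b c f| <= e * `|a| * `|b| * `|c| * `|f|.

Definition C4b_derivs (V W : normedModType R) (F : V -> W) (D1 : V -> V -> W)
    (D2 : V -> V -> V -> W) (D3 : V -> V -> V -> V -> W)
    (D4 : V -> V -> V -> V -> V -> W) : Prop :=
  [/\ [/\ (forall x, is_lin (D1 x)), (forall x, is_bilin (D2 x)),
      (forall x, is_trilin (D3 x)) & (forall x, is_quadrilin (D4 x))],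
      [/\ frechet0 F D1, frechet1 D1 D2, frechet2 D2 D3, frechet3 D3 D4 & opcont4 D4] &
      exists M : R,
        [/\ (forall x, `|F x| <= M),
            (forall x a, `|D1 x a| <= M * `|a|),
            (forall x a b, `|D2 x a b| <= M * `|a| * `|b|),
            (forall x a b c, `|D3 x a b c| <= M * `|a| * `|b| * `|c|) &
            (forall x a b c d, `|D4 x a b c d| <= M * `|a| * `|b| * `|c| * `|d|)]].

(** Partitions of [a,b]: p = [t_1; ...; t_n] with a = t_0 < t_1 < ... < t_n = b. *)
Definition is_partition (a b : R) (p : seq R) : bool :=
  path <%R a p && (last a p == b).

Definition mesh_lt (a : R) (p : seq R) (d : R) : bool :=
  all (fun st : R * R => st.2 - st.1 < d) (zip (a :: p) p).

Definition riemann_sum (W : normedModType R) (a : R) (p : seq R) (g : R -> R -> W) : W :=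
  \sum_(st <- zip (a :: p) p) g st.1 st.2.

End Defs.

(* The germ Xi_{s,t} = DF(X_s) X_{s,t} + D^2F(X_s) A_{s,t} + D^3F(X_s) B_{s,t}
   has a coboundary Xi_{s,t} - Xi_{s,u} - Xi_{u,t} of order |t - s|^{4 alpha}:
   by Chen's relations and the symmetry of the derivatives of F it is a sum of
   Taylor remainders of DF, D^2F and D^3F along X, plus the term
   - D^3F(X_s) ([X]_{s,u} (x) X_{u,t}) / 2, which the bound on the first
   bracket makes of the same order.  As 4 alpha > 1, the sewing lemma applies:
   splitting a partition at the midpoint of [a, b] gives the maximal inequality
   |sum over the partition - Xi_{a,b}| <= K |b - a|^{4 alpha}, so Riemann sums
   over two fine partitions are both close to the sums over their common
   refinement, and the completeness of W provides the limit. *)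

From HB Require Import structures.
From mathcomp Require Import all_boot all_order all_algebra.
From mathcomp Require Import all_classical all_reals all_analysis.
From mathcomp Require Import ring lra.
Import Order.TTheory GRing.Theory Num.Theory.
Import numFieldNormedType.Exports.
Local Open Scope ring_scope.
Set Implicit Arguments.
Unset Strict Implicit.
Unset Printing Implicit Defensive.

Ltac cancel_summand y := try rewrite (addrC y); repeat rewrite (addrAC _ y).
Ltac cancel_summands :=
  repeat match goal with
  | |- is_true (?y - ?y == 0) => rewrite subrr
  | |- is_true (- ?y + ?y == 0) => rewrite addNr
  | |- is_true (?S - ?y == 0) =>
      cancel_summand y; first [rewrite (addrK y) | rewrite (subrK y)]
  | |- is_true (?S + ?y == 0) =>
      cancel_summand (- y);
      first [rewrite (addrK y) | rewrite (subrK y) | rewrite (addrNK y)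
            | rewrite (addNKr y) | rewrite (addrK (- y))]
  end.

(* Decides identities in an abelian group that hold by cancelling summands. *)
Ltac zmodule_eq :=
  apply/eqP; rewrite -subr_eq0 ?opprD ?opprK ?oppr0 ?subr0 ?addr0 ?add0r ?addrA;
  cancel_summands; rewrite ?subrr ?addNr ?eqxx //.

Section LinearMaps.
Variable R : realType.

Section Basic.
Variables (U Z : normedModType R) (f : U -> Z).
Hypothesis f_lin : is_lin f.

Lemma is_lin0 : f 0 = 0.
Proof.
have := f_lin 1 0 0; rewrite !scale1r addr0 => f00.
by apply: (addIr (f 0)); rewrite add0r -f00.
Qed.

Lemma is_linD u v : f (u + v) = f u + f v.
Proof. by have := f_lin 1 u v; rewrite !scale1r. Qed.

Lemma is_linZ a u : f (a *: u) = a *: f u.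
Proof. by have := f_lin a u 0; rewrite !addr0 is_lin0 addr0. Qed.

Lemma is_linB u v : f (u - v) = f u - f v.
Proof. by rewrite is_linD -scaleN1r is_linZ scaleN1r. Qed.

Lemma is_lin_continuous M : 0 <= M -> (forall p, `|f p| <= M * `|p|) -> continuous f.
Proof.
move=> M0 f_le x; apply/cvgrPdist_lt => e e0.
have M1 : 0 < M + 1 by rewrite ltr_wpDl.
apply/nbhs_normP; exists (e / (M + 1)); first by rewrite /= divr_gt0.
move=> y /=; rewrite ltr_pdivlMr // -is_linB => xy.
by apply: le_lt_trans (f_le _) _; have := normr_ge0 (x - y); nra.
Qed.

End Basic.

Lemma is_lin_sub (U Z : normedModType R) (f g : U -> Z) :
  is_lin f -> is_lin g -> is_lin (fun p => f p - g p).
Proof. by move=> f_lin g_lin k u v; rewrite f_lin g_lin scalerBr; zmodule_eq. Qed.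

Lemma is_lin_comp (U Y Z : normedModType R) (f : U -> Y) (g : Y -> Z) :
  is_lin f -> is_lin g -> is_lin (g \o f).
Proof. by move=> f_lin g_lin k u v /=; rewrite f_lin g_lin. Qed.

End LinearMaps.

Section MeanValue.
Variables (R : realType) (W : normedModType R).
Local Open Scope classical_set_scope.

Definition has_derivative (f f' : R -> W) :=
  forall tau e, 0 < e -> exists d, 0 < d /\
    forall eta, `|eta| < d -> `|f (tau + eta) - f tau - eta *: f' tau| <= e * `|eta|.

Lemma increment_chain (f : R -> W) (k x y z : R) :
  `|f z - f y| <= k * (z - y) -> `|f y - f x| <= k * (y - x) ->
  `|f z - f x| <= k * (z - x).
Proof.
have -> : f z - f x = (f z - f y) + (f y - f x) by zmodule_eq.
by move=> ? ?; apply: le_trans (ler_normD _ _) _; lra.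
Qed.

Lemma increment_left_limit (f : R -> W) (k s d : R) : 0 <= s -> 0 < d ->
  (forall v, `|v - s| < d -> `|f v - f s| <= k * `|v - s|) ->
  (forall u, 0 <= u < s -> `|f u - f 0| <= k * u) -> `|f s - f 0| <= k * s.
Proof.
move=> s0 d0 near_s below_s.
have [->|sn0] := eqVneq s 0; first by rewrite subrr normr0 mulr0.
have spos : 0 < s by rewrite lt_neqAle eq_sym sn0 s0.
pose v := Num.max 0 (s - d / 2).
have v0 : 0 <= v by rewrite le_max lexx.
have vs : v < s by rewrite gt_max spos /= ltrBlDr ltrDl divr_gt0.
have sv : `|v - s| = s - v by rewrite distrC ger0_norm // subr_ge0 ltW.
have dv : `|v - s| < d.
  rewrite sv ltrBlDr; apply: lt_le_trans (_ : d + (s - d / 2) <= _); first lra.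
  by rewrite lerD2l le_max lexx orbT.
rewrite -[X in _ <= k * X](subr0 s); apply: (increment_chain (y := v)).
  by rewrite distrC -sv; apply: near_s.
by rewrite subr0; apply: below_s; rewrite v0.
Qed.

(* Continuous induction along the supremum of the interval on which the
   global bound already holds. *)
Lemma lipschitz_local_global01 (f : R -> W) (k : R) :
  (forall t, 0 <= t <= 1 -> exists2 d, 0 < d &
     forall v, `|v - t| < d -> `|f v - f t| <= k * `|v - t|) ->
  `|f 1 - f 0| <= k.
Proof.
move=> loc.
pose P t := forall u, 0 <= u <= t -> `|f u - f 0| <= k * u.
pose E := [set t : R | 0 <= t <= 1 /\ P t].
have E0 : E 0.
  split=> [|u /andP[u0 u1]]; first by rewrite lexx ler01.
  have -> : u = 0 by apply/eqP; rewrite eq_le u1 u0.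
  by rewrite subrr normr0 mulr0.
have supE : has_sup E by split; [exists 0 | exists 1 => t [/andP[_ ->]]].
set s := sup E.
have s0 : 0 <= s by apply: sup_upper_bound.
have s1 : s <= 1 by apply: ge_sup; [exists 0 | move=> t [/andP[_ ->]]].
have [d d0 near_s] := loc s (introT andP (conj s0 s1)).
have below_s u : 0 <= u < s -> `|f u - f 0| <= k * u.
  move=> /andP[u0 us]; have su0 : 0 < s - u by rewrite subr_gt0.
  have [t [_ Pt] ut] := sup_adherent su0 supE.
  by apply: Pt; rewrite u0 ltW //; move: ut; rewrite /s; lra.
have Ps : P s.
  move=> u /andP[u0 us]; have [ult|su] := ltP u s; first by apply: below_s; rewrite u0.
  have -> : u = s by apply/eqP; rewrite eq_le us su.
  exact: increment_left_limit s0 d0 near_s below_s.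
suff s_eq1 : s = 1 by rewrite -[X in _ <= X]mulr1 -s_eq1; apply: Ps; rewrite s0 lexx.
apply/eqP; rewrite eq_le s1 leNgt; apply/negP => slt1.
pose eta := Num.min (d / 2) (1 - s).
have eta0 : 0 < eta by rewrite lt_min divr_gt0 //= subr_gt0.
have eta_d : eta <= d / 2 by rewrite ge_min lexx.
have eta_1 : eta <= 1 - s by rewrite ge_min lexx orbT.
suff : E (s + eta) by move/sup_upper_bound => /(_ supE); rewrite -/s; lra.
split=> [|u /andP[u0 ue]]; first by apply/andP; split; lra.
have [us|su] := leP u s; first by apply: Ps; rewrite u0.
have us' : `|u - s| = u - s by rewrite ger0_norm // subr_ge0 ltW.
rewrite -[X in _ <= k * X](subr0 u); apply: (increment_chain (y := s)).
  by rewrite -us'; apply: near_s; rewrite us'; lra.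
by rewrite subr0; apply: Ps; rewrite s0 lexx.
Qed.

Lemma mean_value_ineq01 (f f' : R -> W) (m : R) :
  has_derivative f f' -> (forall tau, 0 <= tau <= 1 -> `|f' tau| <= m) ->
  `|f 1 - f 0| <= m.
Proof.
move=> df f'_le; apply/ler_addgt0Pr => eps eps0.
apply: lipschitz_local_global01 => t t01.
have [d [d0 df_t]] := df t eps eps0.
exists d => // v vt; have := df_t (v - t) vt; rewrite [t + _]addrC subrK => rem.
rewrite -(subrK ((v - t) *: f' t) (f v - f t)).
apply: le_trans (ler_normD _ _) _; rewrite normrZ.
by have := f'_le t t01; have := normr_ge0 (v - t); nra.
Qed.

Lemma has_derivativeB (f f' g g' : R -> W) :
  has_derivative f f' -> has_derivative g g' ->
  has_derivative (fun t => f t - g t) (fun t => f' t - g' t).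
Proof.
move=> df dg tau e e0.
have [d1 [d10 df_tau]] := df tau _ (divr_gt0 e0 (ltr0Sn _ 1)).
have [d2 [d20 dg_tau]] := dg tau _ (divr_gt0 e0 (ltr0Sn _ 1)).
exists (Num.min d1 d2); split; first by rewrite lt_min d10 d20.
move=> eta; rewrite lt_min => /andP[eta1 eta2].
have -> : f (tau + eta) - g (tau + eta) - (f tau - g tau) - eta *: (f' tau - g' tau) =
    (f (tau + eta) - f tau - eta *: f' tau) - (g (tau + eta) - g tau - eta *: g' tau).
  by rewrite scalerBr; zmodule_eq.
by apply: le_trans (ler_normB _ _) _; have := df_tau _ eta1; have := dg_tau _ eta2; lra.
Qed.

Lemma has_derivative_scale (w : W) : has_derivative (fun t => t *: w) (fun => w).
Proof.
move=> tau e e0; exists 1; split=> // eta _.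
by rewrite scalerDl addrAC addrK subrr normr0 mulr_ge0 // ltW.
Qed.

Lemma has_derivative_half_square (w : W) :
  has_derivative (fun t => (t ^+ 2 / 2) *: w) (fun t => t *: w).
Proof.
move=> tau e e0.
have w1 : 0 < `|w| + 1 by rewrite ltr_wpDl.
exists (e / (`|w| + 1)); split; first by rewrite divr_gt0.
move=> eta; rewrite ltr_pdivlMr // => eta_small.
have -> : ((tau + eta) ^+ 2 / 2) *: w - (tau ^+ 2 / 2) *: w - eta *: (tau *: w)
    = (eta ^+ 2 / 2) *: w.
  have -> : eta ^+ 2 / 2 = (tau + eta) ^+ 2 / 2 - tau ^+ 2 / 2 - eta * tau by field.
  by rewrite !scalerBl scalerA.
rewrite normrZ ger0_norm ?divr_ge0 ?sqr_ge0 // -real_normK ?num_real //.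
by have := normr_ge0 eta; have := normr_ge0 w; nra.
Qed.

End MeanValue.

Lemma norm_small_eq0 (R : realType) (W : normedModType R) (v : W) (b : R) :
  0 <= b -> (forall e, 0 < e -> `|v| <= e * b) -> v = 0.
Proof.
move=> b0 v_small; apply/normr0_eq0/eqP; rewrite eq_le normr_ge0 andbT.
apply/ler_addgt0Pr => e e0; rewrite add0r.
have b1 : 0 < b + 1 by rewrite ltr_wpDl.
apply: le_trans (v_small (e / (b + 1)) (divr_gt0 e0 b1)) _.
by rewrite mulrAC ler_pdivrMr // ler_pM2l //; lra.
Qed.

Section ScaledFrechet.
Variables (R : realType) (V W : normedModType R).

(* The error modulus is scaled by [c] so that partial applications
   [fun z => D z a b] of the maps in [frechet1]-[frechet3] are instances
   (with [c = |a| |b|]) without dividing by norms that may vanish. *)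
Definition frechet_scaled (G : V -> W) (G' : V -> V -> W) (c : R) :=
  forall x e, 0 < e -> exists d, 0 < d /\
    forall h, `|h| < d -> `|G (x + h) - G x - G' x h| <= e * c * `|h|.

Lemma frechet_scaled_unique (G : V -> W) G1 G2 c1 c2 x h :
  frechet_scaled G G1 c1 -> frechet_scaled G G2 c2 -> 0 <= c1 -> 0 <= c2 ->
  is_lin (G1 x) -> is_lin (G2 x) -> G1 x h = G2 x h.
Proof.
move=> dG1 dG2 c10 c20 G1_lin G2_lin; apply/eqP; rewrite -subr_eq0; apply/eqP.
apply: (@norm_small_eq0 _ _ _ ((c1 + c2) * `|h|)); first by rewrite mulr_ge0 ?addr_ge0.
move=> e e0.
have [d1 [d10 dG1x]] := dG1 x e e0; have [d2 [d20 dG2x]] := dG2 x e e0.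
have h1 : 0 < `|h| + 1 by rewrite ltr_wpDl.
have dpos : 0 < Num.min d1 d2 by rewrite lt_min d10 d20.
pose s := Num.min d1 d2 / (`|h| + 1) / 2.
have s0 : 0 < s by rewrite !divr_gt0.
have : `|s *: h| < Num.min d1 d2.
  rewrite normrZ gtr0_norm //.
  have : s * (`|h| + 1) = Num.min d1 d2 / 2 by rewrite mulrAC divfK // gt_eqF.
  have : s * `|h| <= s * (`|h| + 1) by apply: ler_wpM2l; [exact: ltW | rewrite lerDl].
  lra.
clearbody s; rewrite lt_min => /andP[/dG1x sh1 /dG2x sh2].
have : `|G1 x (s *: h) - G2 x (s *: h)| <= e * c1 * `|s *: h| + e * c2 * `|s *: h|.
  have -> : G1 x (s *: h) - G2 x (s *: h) =
      (G (x + s *: h) - G x - G2 x (s *: h)) - (G (x + s *: h) - G x - G1 x (s *: h)).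
    by zmodule_eq.
  by apply: le_trans (ler_normB _ _) _; rewrite addrC lerD.
rewrite (is_linZ G1_lin) (is_linZ G2_lin) -scalerBr !normrZ gtr0_norm // => le_s.
by rewrite -(ler_pM2l s0); apply: le_trans le_s _; lra.
Qed.

Section Taylor.
Variables (G : V -> W) (G' : V -> V -> W) (c : R).
Hypotheses (dG : frechet_scaled G G' c) (c0 : 0 <= c) (G'_lin : forall z, is_lin (G' z)).

Lemma frechet_scaled_line x h :
  has_derivative (fun t => G (x + t *: h)) (fun t => G' (x + t *: h) h).
Proof.
move=> tau e e0.
set z := x + tau *: h.
have k0 : 0 < c * `|h| + 1 by rewrite ltr_wpDl // mulr_ge0.
have [d [d0 dGz]] := @dG z _ (divr_gt0 e0 k0).
have h1 : 0 < `|h| + 1 by rewrite ltr_wpDl.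
exists (d / (`|h| + 1)); split; first by rewrite divr_gt0.
move=> eta; rewrite ltr_pdivlMr // => eta_small.
rewrite scalerDl addrA -(is_linZ (G'_lin z)).
have eta_h : `|eta *: h| < d.
  by rewrite normrZ; have := normr_ge0 eta; have := normr_ge0 h; nra.
apply: le_trans (dGz _ eta_h) _; rewrite normrZ.
set q := e / (c * `|h| + 1).
have q_eq : q * (c * `|h| + 1) = e by rewrite /q divfK // gt_eqF.
have q0 : 0 <= q by rewrite /q divr_ge0 // ltW.
by have := normr_ge0 eta; have := normr_ge0 h; nra.
Qed.

Lemma frechet_scaled_lipschitz m x y :
  (forall z h, `|G' z h| <= m * `|h|) -> `|G y - G x| <= m * `|y - x|.
Proof.
move=> G'_le; have := mean_value_ineq01 (frechet_scaled_line x (y - x)) (fun t _ => G'_le _ _).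
by rewrite !scale1r !scale0r !addr0 [x + _]addrC subrK.
Qed.

Lemma frechet_scaled_taylor1 L x y : 0 <= L ->
  (forall z1 z2 a, `|G' z1 a - G' z2 a| <= L * `|z1 - z2| * `|a|) ->
  `|G y - G x - G' x (y - x)| <= L * (`|y - x| * `|y - x|).
Proof.
move=> L0 G'_lip; set h := y - x.
have := mean_value_ineq01 (m := L * (`|h| * `|h|))
  (has_derivativeB (frechet_scaled_line x h) (has_derivative_scale (G' x h))).
rewrite /= !scale1r !scale0r !addr0 subr0 /h [x + _]addrC subrK -/h.
have -> : G y - G' x h - G x = G y - G x - G' x h by zmodule_eq.
apply=> t /andP[t0 t1]; apply: le_trans (G'_lip _ _ _) _.
rewrite [x + _]addrC addrK normrZ ger0_norm //.
have : 0 <= L * (`|h| * `|h|) * (1 - t) by rewrite !mulr_ge0 // subr_ge0.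
lra.
Qed.

Lemma frechet_scaled_taylor2 (G'' : V -> V -> V -> W) L x y :
  (forall b, is_lin (fun a => G'' x a b)) -> 0 <= L ->
  (forall z a, `|G' z a - G' x a - G'' x (z - x) a| <= L * (`|z - x| * `|z - x|) * `|a|) ->
  `|G y - G x - G' x (y - x) - 2^-1 *: G'' x (y - x) (y - x)|
     <= L * (`|y - x| * `|y - x| * `|y - x|).
Proof.
move=> G''_lin L0 G'_taylor; set h := y - x.
have := mean_value_ineq01 (m := L * (`|h| * `|h| * `|h|))
  (has_derivativeB (has_derivativeB (frechet_scaled_line x h)
    (has_derivative_scale (G' x h))) (has_derivative_half_square (G'' x h h))).
rewrite /= !scale1r !scale0r !addr0 !subr0 /h [x + _]addrC subrK -/h.
rewrite expr1n expr0n /= mul0r scale0r subr0 div1r.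
have -> : G y - G' x h - 2^-1 *: G'' x h h - G x =
    G y - G x - G' x h - 2^-1 *: G'' x h h by zmodule_eq.
apply=> t /andP[t0 t1]; have := G'_taylor (x + t *: h) h.
rewrite [x + _]addrC addrK (is_linZ (G''_lin h)) => le_t.
apply: le_trans le_t _; rewrite normrZ ger0_norm //.
have : 0 <= L * (`|h| * `|h| * `|h|) * (1 - t * t) by rewrite !mulr_ge0 // subr_ge0; nra.
lra.
Qed.

Section Symmetry.
Variables (G'' : V -> V -> V -> W) (L : R) (x : V).
Hypotheses (G''_lin1 : forall b, is_lin (fun a => G'' x a b)) (L0 : 0 <= L).
Hypothesis G'_taylor : forall z a,
  `|G' z a - G' x a - G'' x (z - x) a| <= L * (`|z - x| * `|z - x|) * `|a|.

Lemma frechet_scaled_second_difference h k :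
  `|(G (x + h + k) - G (x + k) - G'' x h k) - (G (x + h) - G x)|
     <= 2 * L * ((`|h| + `|k|) * (`|h| + `|k|) * (`|h| + `|k|)).
Proof.
have := mean_value_ineq01 (m := 2 * L * ((`|h| + `|k|) * (`|h| + `|k|) * (`|h| + `|k|)))
  (has_derivativeB (has_derivativeB (frechet_scaled_line (x + h) k)
    (frechet_scaled_line x k)) (has_derivative_scale (G'' x h k))).
rewrite /= !scale1r !scale0r !addr0 subr0.
set N := `|h| + `|k|; apply=> t /andP[t0 t1].
set z1 := x + h + t *: k; set z2 := x + t *: k.
have -> : G' z1 k - G' z2 k - G'' x h k =
    (G' z1 k - G' x k - G'' x (z1 - x) k) - (G' z2 k - G' x k - G'' x (z2 - x) k).
  have -> : h = (z1 - x) - (z2 - x) by rewrite /z1 /z2; zmodule_eq.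
  by rewrite (is_linB (G''_lin1 k)); zmodule_eq.
apply: le_trans (ler_normB _ _) _.
have z1_le : `|z1 - x| <= N.
  have -> : z1 - x = h + t *: k by rewrite /z1; zmodule_eq.
  by apply: le_trans (ler_normD _ _) _; rewrite normrZ ger0_norm // lerD2l ler_piMl.
have z2_le : `|z2 - x| <= N.
  have -> : z2 - x = t *: k by rewrite /z2; zmodule_eq.
  by rewrite normrZ ger0_norm // (le_trans (ler_piMl _ t1)) // lerDr.
have k_le : `|k| <= N by rewrite lerDr.
have cube_le (z : V) : `|z| <= N -> L * (`|z| * `|z|) * `|k| <= L * (N * N * N).
  move=> z_le; rewrite -mulrA ler_wpM2l // ler_pM ?mulr_ge0 //.
  by rewrite ler_pM.
by have := G'_taylor z1 k; have := G'_taylor z2 k;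
  have := cube_le _ z1_le; have := cube_le _ z2_le; lra.
Qed.

(* Schwarz: the second difference of [G] in directions (h, k) is symmetric. *)
Lemma frechet_scaled_second_sym h k :
  (forall a, is_lin (G'' x a)) -> G'' x h k = G'' x k h.
Proof.
move=> G''_lin2; apply/eqP; rewrite -subr_eq0; apply/eqP.
set N := `|h| + `|k|; have N0 : 0 <= N by rewrite addr_ge0.
apply: (@norm_small_eq0 _ _ _ (4 * L * (N * N * N))); first by rewrite !mulr_ge0.
move=> s s0.
have hk := frechet_scaled_second_difference (s *: h) (s *: k).
have kh := frechet_scaled_second_difference (s *: k) (s *: h).
rewrite [x + s *: k + _]addrAC in kh.
rewrite !normrZ !gtr0_norm // -!mulrDr in hk kh.
set Ghk := G (x + s *: h + s *: k) in hk kh.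
have : `|G'' x (s *: h) (s *: k) - G'' x (s *: k) (s *: h)|
    <= 4 * L * (s * N * (s * N) * (s * N)).
  have -> : G'' x (s *: h) (s *: k) - G'' x (s *: k) (s *: h) =
      ((Ghk - G (x + s *: h) - G'' x (s *: k) (s *: h)) - (G (x + s *: k) - G x)) -
      ((Ghk - G (x + s *: k) - G'' x (s *: h) (s *: k)) - (G (x + s *: h) - G x)).
    by zmodule_eq.
  by apply: le_trans (ler_normB _ _) _; rewrite /N; lra.
rewrite !(is_linZ (G''_lin1 _)) !(is_linZ (G''_lin2 _)) !scalerA -scalerBr normrZ.
rewrite gtr0_norm ?mulr_gt0 // => le_s.
rewrite -(ler_pM2l (mulr_gt0 s0 s0)); apply: le_trans le_s _; lra.
Qed.

End Symmetry.
End Taylor.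
End ScaledFrechet.

Section ProjectiveTensorBounds.
Variables (R : realType) (V : normedModType R) (W : completeNormedModType R).

(* The universal property yields a bounded factorisation of [L \o t2]; by
   uniqueness of continuous extensions it is [L] itself. *)
Lemma proj_tensor2_bound (V2 : normedModType R) (t2 : V -> V -> V2) (L : V2 -> W) c :
  proj_tensor2 t2 -> is_lin L -> continuous L -> 0 <= c ->
  (forall a b, `|L (t2 a b)| <= c * `|a| * `|b|) -> forall p, `|L p| <= c * `|p|.
Proof.
move=> [[t2_lin1 t2_lin2] _ t2_univ t2_uniq] L_lin L_cont c0 L_le.
have Lt2_bilin : is_bilin (fun a b => L (t2 a b)).
  by split=> a k u v /=; rewrite ?t2_lin1 ?t2_lin2 (is_linD L_lin) (is_linZ L_lin).
have [L' [L'_lin L'_le L'_t2]] := t2_univ W _ c c0 Lt2_bilin L_le.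
have <- // : L' = L.
by apply: t2_uniq => //; apply: (is_lin_continuous L'_lin c0).
Qed.

Lemma proj_tensor3_bound (V3 : normedModType R) (t3 : V -> V -> V -> V3) (L : V3 -> W) c :
  proj_tensor3 t3 -> is_lin L -> continuous L -> 0 <= c ->
  (forall a b d, `|L (t3 a b d)| <= c * `|a| * `|b| * `|d|) -> forall p, `|L p| <= c * `|p|.
Proof.
move=> [[t3_lin1 [t3_lin2 t3_lin3]] _ t3_univ t3_uniq] L_lin L_cont c0 L_le.
have Lt3_trilin : is_trilin (fun a b d => L (t3 a b d)).
  by split; [|split] => a b k u v /=;
    rewrite ?t3_lin1 ?t3_lin2 ?t3_lin3 (is_linD L_lin) (is_linZ L_lin).
have [L' [L'_lin L'_le L'_t3]] := t3_univ W _ c c0 Lt3_trilin L_le.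
have <- // : L' = L.
by apply: t3_uniq => //; apply: (is_lin_continuous L'_lin c0).
Qed.

End ProjectiveTensorBounds.

Section C4bDerivatives.
Variables (R : realType) (V W : normedModType R).
Variables (F : V -> W) (D1 : V -> V -> W) (D2 : V -> V -> V -> W)
  (D3 : V -> V -> V -> V -> W) (D4 : V -> V -> V -> V -> V -> W) (M : R).
Hypothesis HF : C4b_derivs F D1 D2 D3 D4.
Hypotheses (M0 : 0 <= M)
  (D3_le : forall x a b c, `|D3 x a b c| <= M * `|a| * `|b| * `|c|)
  (D4_le : forall x a b c d, `|D4 x a b c d| <= M * `|a| * `|b| * `|c| * `|d|).

Let D1_lin x : is_lin (D1 x). Proof. by case: HF => [[]]. Qed.
Let D2_bilin x : is_bilin (D2 x). Proof. by case: HF => [[]]. Qed.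
Let D3_trilin x : is_trilin (D3 x). Proof. by case: HF => [[]]. Qed.
Let D4_lin1 x b c d : is_lin (fun a => D4 x a b c d).
Proof. by case: HF => [[_ _ _ /(_ x) []]]. Qed.

Let frechet_F : frechet_scaled F D1 1.
Proof.
case: HF => _ [dF _ _ _ _] _ x e e0.
have [d [d0 dF_x]] := dF x e e0.
by exists d; split=> // h /dF_x; rewrite mulr1.
Qed.

Let frechet_D1 b : frechet_scaled (fun z => D1 z b) (fun z a => D2 z a b) `|b|.
Proof.
case: HF => _ [_ dD1 _ _ _] _ x e e0.
have [d [d0 dD1_x]] := dD1 x e e0.
by exists d; split=> // h /(dD1_x h b); rewrite mulrAC.
Qed.

Let frechet_D2 a b :
  frechet_scaled (fun z => D2 z a b) (fun z h => D3 z h a b) (`|a| * `|b|).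
Proof.
case: HF => _ [_ _ dD2 _ _] _ x e e0.
have [d [d0 dD2_x]] := dD2 x e e0.
by exists d; split=> // h /(dD2_x h a b) le_h; apply: le_trans le_h _; lra.
Qed.

Let frechet_D3 a b c :
  frechet_scaled (fun z => D3 z a b c) (fun z h => D4 z h a b c) (`|a| * `|b| * `|c|).
Proof.
case: HF => _ [_ _ _ dD3 _] _ x e e0.
have [d [d0 dD3_x]] := dD3 x e e0.
by exists d; split=> // h /(dD3_x h a b c) le_h; apply: le_trans le_h _; lra.
Qed.

Lemma D3_lipschitz x y a b c :
  `|D3 y a b c - D3 x a b c| <= M * `|a| * `|b| * `|c| * `|y - x|.
Proof.
apply: (frechet_scaled_lipschitz (frechet_D3 a b c) _ (fun z => D4_lin1 z a b c)).
  by rewrite !mulr_ge0.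
by move=> z h; apply: le_trans (D4_le z h a b c) _; lra.
Qed.

Lemma D2_taylor1 x y a b :
  `|D2 y a b - D2 x a b - D3 x (y - x) a b| <= M * `|a| * `|b| * (`|y - x| * `|y - x|).
Proof.
apply: (frechet_scaled_taylor1 (frechet_D2 a b)); rewrite ?mulr_ge0 //.
- by move=> z; case: (D3_trilin z).
- by move=> z1 z2 h; apply: le_trans (D3_lipschitz z2 z1 h a b) _; lra.
Qed.

Let D2_lipschitz x y a b : `|D2 y a b - D2 x a b| <= M * `|a| * `|b| * `|y - x|.
Proof.
apply: (frechet_scaled_lipschitz (frechet_D2 a b)); rewrite ?mulr_ge0 //.
- by move=> z; case: (D3_trilin z).
- by move=> z h; apply: le_trans (D3_le z h a b) _; lra.
Qed.

Let D1_taylor1 x y a :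
  `|D1 y a - D1 x a - D2 x (y - x) a| <= M * `|a| * (`|y - x| * `|y - x|).
Proof.
apply: (frechet_scaled_taylor1 (frechet_D1 a)); rewrite ?mulr_ge0 //.
- by move=> z; case: (D2_bilin z).
- by move=> z1 z2 h; apply: le_trans (D2_lipschitz z2 z1 h a) _; lra.
Qed.

Lemma D1_taylor2 x y k :
  `|D1 y k - D1 x k - D2 x (y - x) k - 2^-1 *: D3 x (y - x) (y - x) k|
    <= M * `|k| * (`|y - x| * `|y - x| * `|y - x|).
Proof.
apply: (frechet_scaled_taylor2 (frechet_D1 k) (normr_ge0 k) _ (G'' := fun z a b => D3 z a b k)).
- by move=> z; case: (D2_bilin z).
- by move=> b; case: (D3_trilin x) => + _; apply.
- by rewrite mulr_ge0.
- by move=> z a; apply: le_trans (D2_taylor1 x z a k) _; lra.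
Qed.

Lemma D2_sym x a b : D2 x a b = D2 x b a.
Proof.
apply: (frechet_scaled_second_sym frechet_F ler01 D1_lin (L := M)) => //.
- by case: (D2_bilin x).
- by move=> z a'; apply: le_trans (D1_taylor1 x z a') _; lra.
- by case: (D2_bilin x).
Qed.

Lemma D3_sym12 x a b c : D3 x a b c = D3 x b a c.
Proof.
apply: (frechet_scaled_second_sym (frechet_D1 c) (normr_ge0 c) _
  (G'' := fun z a b => D3 z a b c) (L := M * `|c|)); rewrite ?mulr_ge0 //.
- by move=> z; case: (D2_bilin z).
- by move=> b'; case: (D3_trilin x) => + _; apply.
- by move=> z a'; apply: le_trans (D2_taylor1 x z a' c) _; lra.
- by move=> a'; case: (D3_trilin x) => _ [+ _]; apply.
Qed.

(* Both [D3 x _ b c] and [D3 x _ c b] are derivatives of [D2 _ b c]. *)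
Lemma D3_sym23 x a b c : D3 x a b c = D3 x a c b.
Proof.
have dD2_swap : frechet_scaled (fun z => D2 z b c) (fun z h => D3 z h c b) (`|c| * `|b|).
  move=> y e /(frechet_D2 c b y)[d [d0 dD2_y]]; exists d; split=> // h.
  by rewrite !(D2_sym _ b c); apply: dD2_y.
apply: (frechet_scaled_unique (x := x) a (frechet_D2 b c) dD2_swap);
  rewrite ?mulr_ge0 //.
- by case: (D3_trilin x) => + _; apply.
- by case: (D3_trilin x) => + _; apply.
Qed.

End C4bDerivatives.

Ltac ler_mono := repeat first [ apply: ler_pM | apply: mulr_ge0 | apply: exprn_ge0
  | apply: normr_ge0 | assumption | exact: lexx ].

Lemma ler_holder (R : realType) (k x y e : R) :
  0 <= e -> `|x| <= y -> k * `|x| `^ e <= `|k| * y `^ e.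
Proof.
move=> e0 xy; apply: le_trans (_ : `|k| * `|x| `^ e <= _).
  by rewrite ler_wpM2r ?powR_ge0 ?ler_norm.
by rewrite ler_wpM2l // ge0_ler_powR ?nnegrE // (le_trans _ xy).
Qed.

Lemma powR_natrM (R : realType) (x e : R) (n : nat) :
  0 <= x -> x `^ (n%:R * e) = (x `^ e) ^+ n.
Proof. by move=> x0; rewrite mulrC powRrM powR_mulrn // powR_ge0. Qed.

Section Germ.
Variables (R : realType) (V : normedModType R) (V2 V3 W : completeNormedModType R).
Variables (t2 : V -> V -> V2) (t3 : V -> V -> V -> V3).
Hypotheses (Ht2 : proj_tensor2 t2) (Ht3 : proj_tensor3 t3).
Variables (Sym2 : V2 -> V2) (Sym3 : V3 -> V3).
Hypothesis HSym2 : [/\ is_lin Sym2, continuous Sym2 &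
  forall a b, Sym2 (t2 a b) = 2^-1 *: (t2 a b + t2 b a)].
Hypothesis HSym3 : [/\ is_lin Sym3, continuous Sym3 &
  forall a b c, Sym3 (t3 a b c) =
    6^-1 *: (t3 a b c + t3 a c b + t3 b a c + t3 b c a + t3 c a b + t3 c b a)].
Variables (m12 : V -> V2 -> V3) (m21 : V2 -> V -> V3).
Hypothesis Hm12 : forall a, [/\ is_lin (m12 a), continuous (m12 a) &
  forall b c, m12 a (t2 b c) = t3 a b c].
Hypothesis Hm21 : forall c, [/\ is_lin (m21^~ c), continuous (m21^~ c) &
  forall a b, m21 (t2 a b) c = t3 a b c].
Variables (F : V -> W) (D1 : V -> V -> W) (D2 : V -> V -> V -> W)
  (D3 : V -> V -> V -> V -> W) (D4 : V -> V -> V -> V -> V -> W) (M : R).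
Hypothesis HF : C4b_derivs F D1 D2 D3 D4.
Hypotheses (M0 : 0 <= M)
  (D3_le : forall x a b c, `|D3 x a b c| <= M * `|a| * `|b| * `|c|)
  (D4_le : forall x a b c d, `|D4 x a b c d| <= M * `|a| * `|b| * `|c| * `|d|).
Variables (L2 : V -> V2 -> W) (L3 : V -> V3 -> W).
Hypothesis HL2 : forall x, [/\ is_lin (L2 x), continuous (L2 x) &
  forall a b, L2 x (t2 a b) = D2 x a b].
Hypothesis HL3 : forall x, [/\ is_lin (L3 x), continuous (L3 x) &
  forall a b c, L3 x (t3 a b c) = D3 x a b c].

Lemma L3_le x q : `|L3 x q| <= M * `|q|.
Proof.
have [L3_lin L3_cont L3_t3] := HL3 x.
by apply: (proj_tensor3_bound Ht3 L3_lin L3_cont M0) => a b c; rewrite L3_t3.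
Qed.

Lemma m21_le p c : `|m21 p c| <= `|c| * `|p|.
Proof.
have [m21_lin m21_cont m21_t2] := Hm21 c.
apply: (proj_tensor2_bound Ht2 m21_lin m21_cont (normr_ge0 c)) => a b.
by case: Ht3 => _ t3_le _ _; rewrite m21_t2; apply: le_trans (t3_le a b c) _; lra.
Qed.

Lemma L3_lipschitz x y q : `|L3 y q - L3 x q| <= M * `|y - x| * `|q|.
Proof.
have [L3x_lin L3x_cont L3x_t3] := HL3 x; have [L3y_lin L3y_cont L3y_t3] := HL3 y.
apply: (proj_tensor3_bound Ht3 (is_lin_sub L3y_lin L3x_lin)); rewrite ?mulr_ge0 //.
  by move=> p; apply: cvgB; [exact: L3y_cont | exact: L3x_cont].
move=> a b c; rewrite L3x_t3 L3y_t3.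
by apply: le_trans (D3_lipschitz HF D4_le x y a b c) _; lra.
Qed.

Lemma L2_taylor1 x y p :
  `|L2 y p - L2 x p - L3 x (m12 (y - x) p)| <= M * (`|y - x| * `|y - x|) * `|p|.
Proof.
have [L3_lin L3_cont L3_t3] := HL3 x; have [m12_lin m12_cont m12_t2] := Hm12 (y - x).
have [L2x_lin L2x_cont L2x_t2] := HL2 x; have [L2y_lin L2y_cont L2y_t2] := HL2 y.
apply: (proj_tensor2_bound Ht2 (L := fun p => L2 y p - L2 x p - L3 x (m12 (y - x) p))).
- exact/is_lin_sub/(is_lin_comp m12_lin L3_lin)/is_lin_sub.
- move=> q; apply: cvgB; first by apply: cvgB; [exact: L2y_cont | exact: L2x_cont].
  by apply: continuous_comp; [exact: m12_cont | exact: L3_cont].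
- by rewrite !mulr_ge0.
move=> a b; rewrite L2y_t2 L2x_t2 m12_t2 L3_t3.
by apply: le_trans (D2_taylor1 HF M0 D4_le x y a b) _; lra.
Qed.

Lemma L3_Sym3 x q : L3 x (Sym3 q) = L3 x q.
Proof.
have [L3_lin L3_cont L3_t3] := HL3 x; have [Sym3_lin Sym3_cont Sym3_t3] := HSym3.
case: Ht3 => _ _ _ t3_uniq.
suff E : L3 x \o Sym3 = L3 x by exact: (congr1 (fun f => f q) E).
apply: t3_uniq => //.
- exact: is_lin_comp.
- by move=> y; apply: continuous_comp; [exact: Sym3_cont | exact: L3_cont].
move=> a b c /=.
have sym12 := D3_sym12 HF M0 D4_le x; have sym23 := D3_sym23 HF M0 D3_le x.
have e_acb : D3 x a c b = D3 x a b c by rewrite sym23.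
have e_bac : D3 x b a c = D3 x a b c by rewrite sym12.
have e_bca : D3 x b c a = D3 x a b c by rewrite sym23 sym12.
have e_cab : D3 x c a b = D3 x a b c by rewrite sym12 sym23.
have e_cba : D3 x c b a = D3 x a b c by rewrite sym23 sym12 sym23.
rewrite Sym3_t3 (is_linZ L3_lin) !(is_linD L3_lin) !L3_t3 e_acb e_bac e_bca e_cab e_cba.
have -> : forall d : W, d + d + d + d + d + d = 6%:R *: d.
  by move=> d; rewrite scaler_nat !mulrSr mulr0n add0r.
by rewrite scalerA mulVf ?scale1r // pnatr_eq0.
Qed.

Lemma L2_Sym2 x p : L2 x (Sym2 p) = L2 x p.
Proof.
have [L2_lin L2_cont L2_t2] := HL2 x; have [Sym2_lin Sym2_cont Sym2_t2] := HSym2.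
case: Ht2 => _ _ _ t2_uniq.
suff E : L2 x \o Sym2 = L2 x by exact: (congr1 (fun f => f p) E).
apply: t2_uniq => //.
- exact: is_lin_comp.
- by move=> y; apply: continuous_comp; [exact: Sym2_cont | exact: L2_cont].
move=> a b /=.
rewrite Sym2_t2 (is_linZ L2_lin) (is_linD L2_lin) !L2_t2 (D2_sym HF M0 D3_le x b a).
have -> : forall d : W, d + d = 2%:R *: d.
  by move=> d; rewrite scaler_nat !mulrSr mulr0n add0r.
by rewrite scalerA mulVf ?scale1r // pnatr_eq0.
Qed.

Variables (X : R -> V) (A : R -> R -> V2) (B : R -> R -> V3).

Definition germ s t := D1 (X s) (X t - X s) + L2 (X s) (A s t) + L3 (X s) (B s t).

Lemma germ_coboundaryE s u t :
  A s t - A s u - A u t = Sym2 (t2 (X u - X s) (X t - X u)) ->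
  B s t - B s u - B u t = Sym3 (m12 (X u - X s) (A u t) + m21 (A s u) (X t - X u)) ->
  let x := X s in let y := X u in let h := y - x in let k := X t - y in
  germ s t - germ s u - germ u t =
    - (D1 y k - D1 x k - D2 x h k - 2^-1 *: D3 x h h k)
    - (L2 y (A u t) - L2 x (A u t) - L3 x (m12 h (A u t)))
    + L3 x (m21 (A s u - 2^-1 *: t2 h h) k)
    - (L3 y (B u t) - L3 x (B u t)).
Proof.
move=> chenA chenB x y h k; rewrite /germ -/x -/y.
have [L2_lin _ L2_t2] := HL2 x; have [L3_lin _ L3_t3] := HL3 x.
have [m21_lin _ m21_t2] := Hm21 k.
have D1_lin : is_lin (D1 x) by case: HF => [[]].
have -> : A s t = A s u + A u t + Sym2 (t2 h k) by rewrite -chenA; zmodule_eq.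
have -> : B s t = B s u + B u t + Sym3 (m12 h (A u t) + m21 (A s u) k).
  by rewrite -chenB; zmodule_eq.
have -> : X t - x = h + k by rewrite /h /k; zmodule_eq.
rewrite (is_linD D1_lin) !(is_linD L2_lin) !(is_linD L3_lin).
rewrite L2_Sym2 L2_t2 L3_Sym3 (is_linD L3_lin) -/k.
rewrite (is_linB m21_lin) (is_linZ m21_lin) m21_t2 (is_linB L3_lin) (is_linZ L3_lin) L3_t3.
by zmodule_eq.
Qed.

Lemma germ_coboundary_le s u t :
  A s t - A s u - A u t = Sym2 (t2 (X u - X s) (X t - X u)) ->
  B s t - B s u - B u t = Sym3 (m12 (X u - X s) (A u t) + m21 (A s u) (X t - X u)) ->
  `|germ s t - germ s u - germ u t| <=
    M * `|X t - X u| * (`|X u - X s| * `|X u - X s| * `|X u - X s|)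
    + M * (`|X u - X s| * `|X u - X s|) * `|A u t|
    + M * (`|X t - X u| * `|A s u - 2^-1 *: t2 (X u - X s) (X u - X s)|)
    + M * `|X u - X s| * `|B u t|.
Proof.
move=> chenA chenB; rewrite (germ_coboundaryE chenA chenB) /=.
set T1 := D1 _ _ - _ - _ - _; set T2 := L2 _ _ - _ - _; set T4 := L3 _ _ - L3 _ _.
have T1_le := D1_taylor2 HF M0 D4_le (X s) (X u) (X t - X u).
have T2_le := L2_taylor1 (X s) (X u) (A u t).
have T3_le : `|L3 (X s) (m21 (A s u - 2^-1 *: t2 (X u - X s) (X u - X s)) (X t - X u))|
    <= M * (`|X t - X u| * `|A s u - 2^-1 *: t2 (X u - X s) (X u - X s)|).
  by apply: le_trans (L3_le _ _) _; rewrite ler_wpM2l // m21_le.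
have T4_le := L3_lipschitz (X s) (X u) (B u t).
apply: le_trans (ler_normB _ _) _; apply: le_trans (lerD (ler_normD _ _) (lexx _)) _.
apply: le_trans (lerD (lerD (ler_normB _ _) (lexx _)) (lexx _)) _.
by rewrite !normrN; lra.
Qed.

Variables (T alpha K C : R).
Hypothesis alpha_ge0 : 0 <= alpha.
Hypothesis chenA : forall s u t, 0 <= s <= T -> 0 <= u <= T -> 0 <= t <= T ->
  A s t - A s u - A u t = Sym2 (t2 (X u - X s) (X t - X u)).
Hypothesis chenB : forall s u t, 0 <= s <= T -> 0 <= u <= T -> 0 <= t <= T ->
  B s t - B s u - B u t = Sym3 (m12 (X u - X s) (A u t) + m21 (A s u) (X t - X u)).
Hypothesis holder : forall s t, 0 <= s <= T -> 0 <= t <= T ->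
  [/\ `|X t - X s| <= K * `|t - s| `^ alpha, `|A s t| <= K * `|t - s| `^ (2 * alpha) &
      `|B s t| <= K * `|t - s| `^ (3 * alpha)].
Hypothesis bracket : forall s t, 0 <= s <= T -> 0 <= t <= T ->
  `|t2 (X t - X s) (X t - X s) - 2 *: A s t| <= C * `|t - s| `^ (3 * alpha).

Lemma germ_coboundary_holder s u r : 0 <= s -> s <= u -> u <= r -> r <= T ->
  `|germ s r - germ s u - germ u r|
    <= M * (`|K| ^+ 4 + `|K| ^+ 3 + `|C| * `|K| + `|K| ^+ 2) * (r - s) `^ (4 * alpha).
Proof.
move=> s0 su ur rT.
have sT : 0 <= s <= T by rewrite s0 (le_trans su (le_trans ur rT)).
have uT : 0 <= u <= T by rewrite (le_trans s0 su) (le_trans ur rT).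
have rT' : 0 <= r <= T by rewrite (le_trans s0 (le_trans su ur)) rT.
set P := (r - s) `^ alpha; have P0 : 0 <= P by exact: powR_ge0.
have rs0 : 0 <= r - s by rewrite subr_ge0 (le_trans su ur).
have us_le : `|u - s| <= r - s by rewrite ger0_norm ?subr_ge0 //; lra.
have ru_le : `|r - u| <= r - s by rewrite ger0_norm ?subr_ge0 //; lra.
have pow_le n (k z : R) : `|z| <= r - s -> k * `|z| `^ (n%:R * alpha) <= `|k| * P ^+ n.
  by move=> z_le; rewrite -powR_natrM // ler_holder // mulr_ge0.
have [Xsu _ _] := holder sT uT; have [Xur Aur Bur] := holder uT rT'.
have h_le : `|X u - X s| <= `|K| * P by apply: le_trans Xsu (ler_holder _ _ _).
have k_le : `|X r - X u| <= `|K| * P by apply: le_trans Xur (ler_holder _ _ _).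
have a_le : `|A u r| <= `|K| * P ^+ 2 by apply: le_trans Aur (pow_le 2 _ _ ru_le).
have b_le : `|B u r| <= `|K| * P ^+ 3 by apply: le_trans Bur (pow_le 3 _ _ ru_le).
have q_le : `|A s u - 2^-1 *: t2 (X u - X s) (X u - X s)| <= `|C| * P ^+ 3.
  have -> : A s u - 2^-1 *: t2 (X u - X s) (X u - X s) =
      (- 2^-1) *: (t2 (X u - X s) (X u - X s) - 2 *: A s u).
    by rewrite scalerBr scalerA mulNr mulVf ?pnatr_eq0 // scaleN1r opprK scaleNr; zmodule_eq.
  rewrite normrZ normrN ger0_norm ?invr_ge0 //.
  have := le_trans (bracket sT uT) (pow_le 3 _ _ us_le).
  have : 0 <= `|C| * P ^+ 3 by rewrite mulr_ge0 ?exprn_ge0.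
  lra.
apply: le_trans (germ_coboundary_le (chenA sT uT rT') (chenB sT uT rT')) _.
rewrite (powR_natrM _ 4 rs0) -/P.
have KP0 : 0 <= `|K| * P by rewrite mulr_ge0.
apply: le_trans (_ : M * (`|K| * P) * ((`|K| * P) * (`|K| * P) * (`|K| * P))
  + M * ((`|K| * P) * (`|K| * P)) * (`|K| * P ^+ 2)
  + M * ((`|K| * P) * (`|C| * P ^+ 3)) + M * (`|K| * P) * (`|K| * P ^+ 3) <= _).
  by rewrite !lerD //; ler_mono.
lra.
Qed.

End Germ.

Section Partitions.
Variable R : realType.
Implicit Types (a b m : R) (p q : seq R).

Lemma riemann_sum_nil (W : normedModType R) a (g : R -> R -> W) :
  riemann_sum a [::] g = 0.
Proof. by rewrite /riemann_sum big_nil. Qed.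

Lemma riemann_sum_cons (W : normedModType R) a x p (g : R -> R -> W) :
  riemann_sum a (x :: p) g = g a x + riemann_sum x p g.
Proof. by rewrite /riemann_sum /= big_cons. Qed.

Lemma riemann_sum_cat (W : normedModType R) a p q (g : R -> R -> W) :
  riemann_sum a (p ++ q) g = riemann_sum a p g + riemann_sum (last a p) q g.
Proof.
elim: p a => [|x p IHp] a /=; first by rewrite riemann_sum_nil add0r.
by rewrite !riemann_sum_cons IHp addrA.
Qed.

Lemma path_le_last a p :
  path <%R a p -> a <= last a p /\ forall y, y \in p -> y <= last a p.
Proof.
elim: p a => [|x p IHp] a /=; first by split=> // y; rewrite in_nil.
move=> /andP[ax /IHp[x_le p_le]]; split; first exact: le_trans (ltW ax) x_le.
by move=> y; rewrite in_cons => /orP[/eqP->|/p_le].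
Qed.

Lemma path_gt_head a p : path <%R a p -> forall y, y \in p -> a < y.
Proof. by move/(order_path_min lt_trans)/allP. Qed.

Lemma path_last_eq_head a p : path <%R a p -> last a p = a -> p = [::].
Proof.
case: p => [//|x p] /= /andP[ax xp] last_eq.
by have [+ _] := path_le_last xp; rewrite last_eq => /(lt_le_trans ax); rewrite ltxx.
Qed.

Lemma path_last_eq_max a b p : path <%R a p -> b \in p ->
  (forall y, y \in p -> y <= b) -> last a p = b.
Proof.
elim: p a => [|x p IHp] a //= /andP[ax xp].
rewrite in_cons => /orP[/eqP bx|bp] p_le; last first.
  by apply: IHp => // y yp; apply: p_le; rewrite in_cons yp orbT.
case: p {IHp} xp p_le => [|y p] /=; first by rewrite bx.
move=> /andP[xy _] /(_ y); rewrite !in_cons eqxx orbT bx => /(_ isT).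
by move/(lt_le_trans xy); rewrite ltxx.
Qed.

Lemma path_split_at a m p : path <%R a p ->
  exists p1 p2, [/\ p = p1 ++ p2, forall y, y \in p1 -> y <= m & forall y, y \in p2 -> m < y].
Proof.
elim: p a => [|x p IHp] a /=.
  by move=> _; exists [::], [::]; split=> // y; rewrite in_nil.
move=> /andP[ax xp]; have [xm|mx] := leP x m.
  have [p1 [p2 [-> p1_le p2_gt]]] := IHp _ xp.
  exists (x :: p1), p2; split=> // y; rewrite in_cons => /orP[/eqP->|/p1_le] //.
exists [::], (x :: p); split=> // y; rewrite in_cons => /orP[/eqP->//|yp].
exact: lt_trans mx (path_gt_head xp yp).
Qed.

Lemma common_refinement a b p q :
  path <%R a p -> last a p = b -> path <%R a q -> last a q = b ->
  exists r, [/\ path <%R a r, last a r = b, {subset p <= r} & {subset q <= r}].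
Proof.
move=> ap pb aq qb; have [ba|ab] := eqVneq b a.
  rewrite ba in pb qb; rewrite (path_last_eq_head ap pb) (path_last_eq_head aq qb).
  by exists [::]; split; rewrite ?ba.
pose r := sort <=%R (undup (p ++ q)).
have mem_r x : (x \in r) = (x \in p) || (x \in q).
  by rewrite mem_sort mem_undup mem_cat.
have ar : path <%R a r.
  rewrite path_min_sorted ?sort_lt_sorted ?undup_uniq //; apply/allP => x.
  by rewrite mem_r => /orP[/(path_gt_head ap) | /(path_gt_head aq)].
exists r; split=> //; last 2 first.
- by move=> x xp; rewrite mem_r xp.
- by move=> x xq; rewrite mem_r xq orbT.
apply: path_last_eq_max => //.
  rewrite mem_r -pb; apply/orP; left.
  by have := mem_last a p; rewrite in_cons pb (negPf ab).
move=> y; rewrite mem_r => /orP[yp|yq].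
  by have [_ /(_ y yp)] := path_le_last ap; rewrite pb.
by have [_ /(_ y yq)] := path_le_last aq; rewrite qb.
Qed.

Definition incr_pow_sum (th a : R) p := \sum_(st <- zip (a :: p) p) (st.2 - st.1) `^ th.

Lemma incr_pow_sum_nil th a : incr_pow_sum th a [::] = 0.
Proof. by rewrite /incr_pow_sum big_nil. Qed.

Lemma incr_pow_sum_cons th a x p :
  incr_pow_sum th a (x :: p) = (x - a) `^ th + incr_pow_sum th x p.
Proof. by rewrite /incr_pow_sum /= big_cons. Qed.

Lemma incr_pow_sum_le_mesh (th d : R) a p : 1 <= th -> path <%R a p -> mesh_lt a p d ->
  incr_pow_sum th a p <= d `^ (th - 1) * (last a p - a).
Proof.
move=> th1; elim: p a => [|x p IHp] a /=; first by rewrite incr_pow_sum_nil subrr mulr0.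
move=> /andP[ax xp] /andP[/= xa_lt pmesh]; rewrite incr_pow_sum_cons.
have xa0 : 0 <= x - a by rewrite subr_ge0 ltW.
have -> : d `^ (th - 1) * (last x p - a) =
    d `^ (th - 1) * (x - a) + d `^ (th - 1) * (last x p - x) by ring.
apply: lerD; last exact: IHp.
rewrite -(mulr_powRB1 xa0 (lt_le_trans ltr01 th1)) mulrC ler_wpM2r //.
by apply: ge0_ler_powR; rewrite ?nnegrE; lra.
Qed.

Lemma mesh_lt_le a p d d' : d <= d' -> mesh_lt a p d -> mesh_lt a p d'.
Proof. by move=> dd' /allP p_lt; apply/allP => st /p_lt /lt_le_trans; apply. Qed.

Fixpoint uniform_part (n : nat) (a h : R) : seq R :=
  if n is n'.+1 then (a + h) :: uniform_part n' (a + h) h else [::].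

Lemma uniform_part_path n a h : 0 < h -> path <%R a (uniform_part n a h).
Proof. by move=> h0; elim: n a => [|n IHn] a //=; rewrite IHn ltrDl h0. Qed.

Lemma uniform_part_last n a h : last a (uniform_part n a h) = a + n%:R * h.
Proof.
elim: n a => [|n IHn] a /=; first by rewrite mul0r addr0.
by rewrite IHn -[n.+1]addn1 natrD; ring.
Qed.

Lemma uniform_part_mesh n a h d : h < d -> mesh_lt a (uniform_part n a h) d.
Proof.
move=> hd; elim: n a => [|n IHn] a //=.
by rewrite /mesh_lt /= addrAC subrr add0r hd; exact: IHn.
Qed.

(* [truncn ((b - a) / d) + 1] equal steps are shorter than [d]. *)
Lemma exists_partition_mesh_lt a b d : a <= b -> 0 < d ->
  exists p, is_partition a b p && mesh_lt a p d.
Proof.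
rewrite le_eqVlt => /orP[/eqP <- | ab] d0; first by exists [::]; rewrite /is_partition /= eqxx.
set n := (Num.truncn ((b - a) / d)).+1.
have n0 : (0 : R) < n%:R by rewrite ltr0n.
have h0 : 0 < (b - a) / n%:R by rewrite divr_gt0 // subr_gt0.
exists (uniform_part n a ((b - a) / n%:R)).
rewrite /is_partition uniform_part_path // uniform_part_last [_%:R * _]mulrC.
rewrite divfK ?lt0r_neq0 // addrC subrK eqxx uniform_part_mesh //.
by rewrite ltr_pdivrMr // mulrC -ltr_pdivrMr // truncnS_gt.
Qed.

End Partitions.

Section Sewing.
Variables (R : realType) (W : normedModType R) (Xi : R -> R -> W) (T th K0 : R).
Hypotheses (th_gt1 : 1 < th) (K0_ge0 : 0 <= K0).
Hypothesis Xi_coboundary : forall s u t, 0 <= s -> s <= u -> u <= t -> t <= T ->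
  `|Xi s t - Xi s u - Xi u t| <= K0 * (t - s) `^ th.

Local Notation q := ((2 : R)^-1 `^ th).

Let two_q_lt1 : 2 * q < 1.
Proof.
have half_ge0 : (0 : R) <= 2^-1 by rewrite invr_ge0.
rewrite -(mulr_powRB1 half_ge0 (lt_trans ltr01 th_gt1)) mulrA mulfV ?pnatr_eq0 // mul1r.
have th1 : 0 < th - 1 by rewrite subr_gt0.
have := @gt0_ltr_powR _ (th - 1) th1 2^-1 1; rewrite powR1; apply.
- by rewrite nnegrE invr_ge0.
- by rewrite nnegrE.
- by rewrite invf_lt1; lra.
Qed.

(* Fixed point of the recursion [K = 2 K q + 2 K0] of the dyadic splitting. *)
Definition sewing_const := 2 * K0 / (1 - 2 * q).
Local Notation K := sewing_const.

Let K_ge0 : 0 <= K.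
Proof. by rewrite /sewing_const divr_ge0 ?mulr_ge0 // subr_ge0 ltW // two_q_lt1. Qed.

Let K_fixpoint : 2 * K * q + 2 * K0 = K.
Proof.
have : K * (1 - 2 * q) = 2 * K0.
  by rewrite /sewing_const divfK // subr_eq0 gt_eqF // two_q_lt1.
by move=> <-; ring.
Qed.

Let Xi_diag s : 0 <= s -> s <= T -> Xi s s = 0.
Proof.
move=> s0 sT; have := Xi_coboundary s0 (lexx s) (lexx s) sT.
rewrite (subrr s) (subrr (Xi s s)) sub0r normrN powR0 ?gt_eqF ?(lt_trans ltr01) //.
by rewrite mulr0 normr_le0 => /eqP.
Qed.

Let pow_le x y : 0 <= x -> x <= y -> x `^ th <= y `^ th.
Proof.
move=> x0 xy; apply: ge0_ler_powR; rewrite ?nnegrE ?(le_trans x0 xy) //.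
exact: ltW (lt_trans ltr01 th_gt1).
Qed.

Lemma riemann_sum_split_le a u v b (S1 S3 : W) :
  0 <= a -> a <= u -> u < v -> v <= b -> b <= T ->
  u - a <= (b - a) / 2 -> b - v <= (b - a) / 2 ->
  `|S1 - Xi a u| <= K * (u - a) `^ th -> `|S3 - Xi v b| <= K * (b - v) `^ th ->
  `|S1 + (Xi u v + S3) - Xi a b| <= K * (b - a) `^ th.
Proof.
move=> a0 au uv vb bT ua_le bv_le S1_le S3_le.
have cob1 := Xi_coboundary a0 au (le_trans (ltW uv) vb) bT.
have cob2 := Xi_coboundary (le_trans a0 au) (ltW uv) vb bT.
have -> : S1 + (Xi u v + S3) - Xi a b =
    (S1 - Xi a u) + (S3 - Xi v b) - (Xi a b - Xi a u - Xi u b)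
    - (Xi u b - Xi u v - Xi v b) by zmodule_eq.
set c := (b - a) `^ th.
have half : ((b - a) / 2) `^ th = c * q by rewrite /c powRM //; lra.
have ua_pow : K * (u - a) `^ th <= K * (c * q).
  by rewrite (ler_wpM2l K_ge0) // -half pow_le //; lra.
have bv_pow : K * (b - v) `^ th <= K * (c * q).
  by rewrite (ler_wpM2l K_ge0) // -half pow_le //; lra.
have bu_pow : K0 * (b - u) `^ th <= K0 * c by rewrite ler_wpM2l // pow_le //; lra.
have Kc : K * c = 2 * (K * (c * q)) + 2 * (K0 * c) by rewrite -{1}K_fixpoint; ring.
apply: le_trans (ler_normB _ _) _; apply: le_trans (lerD (ler_normB _ _) (lexx _)) _.
apply: le_trans (lerD (lerD (ler_normD _ _) (lexx _)) (lexx _)) _.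
move: S1_le S3_le cob1 cob2 ua_pow bv_pow bu_pow Kc; rewrite -/c.
set P := K * (c * q); set Q := K0 * c; set Y := K * c.
set A1 := K * (u - a) `^ th; set A2 := K * (b - v) `^ th; set A3 := K0 * (b - u) `^ th.
lra.
Qed.

(* Maximal inequality, by splitting the partition at the midpoint of [a, b]. *)
Lemma riemann_sum_germ_le a b p : 0 <= a -> b <= T ->
  path <%R a p -> last a p = b -> `|riemann_sum a p Xi - Xi a b| <= K * (b - a) `^ th.
Proof.
have [n] := ubnP (size p); elim: n a b p => // n IHn a b p.
rewrite ltnS => size_p a0 bT ap pb.
have [p0|p_ne] := eqVneq p [::].
  move: pb bT; rewrite p0 => /= <- aT.
  by rewrite riemann_sum_nil Xi_diag // subr0 normr0 mulr_ge0 ?K_ge0 ?powR_ge0.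
have ab : a < b.
  rewrite -pb; case: p p_ne ap {size_p pb} => // x p _ /path_gt_head; apply.
  exact: mem_last x p.
have [p1 [[|v p3] [pE p1_le p2_gt]]] := path_split_at ((a + b) / 2) ap.
  have pb1 : last a p1 = b by rewrite -pb pE cats0.
  have := mem_last a p1; rewrite pb1 in_cons => /orP[/eqP ba | bp1].
    by move: ab; rewrite ba ltxx.
  by have := p1_le b bp1; lra.
set u := last a p1.
have um : u <= (a + b) / 2.
  have := mem_last a p1; rewrite in_cons -/u => /orP[/eqP -> | /(p1_le u) //]; lra.
have mv : (a + b) / 2 < v by apply: p2_gt; rewrite in_cons eqxx.
move: ap pb size_p; rewrite pE cat_path last_cat /= size_cat /=.
move=> /andP[ap1 /andP[uv vp3]] p3b size_p.
have [au _] := path_le_last ap1; have [vb _] := path_le_last vp3; rewrite p3b in vb.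
have sp1 : (size p1 < n)%N by apply: leq_trans size_p; rewrite addnS ltnS leq_addr.
have sp3 : (size p3 < n)%N by apply: leq_trans size_p; rewrite leq_addl.
rewrite riemann_sum_cat riemann_sum_cons -/u.
by apply: riemann_sum_split_le => //; try lra; apply: IHn => //; lra.
Qed.

Lemma riemann_sum_refine_le a b p r : 0 <= a -> b <= T ->
  path <%R a p -> last a p = b -> path <%R a r -> last a r = b -> {subset p <= r} ->
  `|riemann_sum a p Xi - riemann_sum a r Xi| <= K * incr_pow_sum th a p.
Proof.
elim: p a r => [|x p IHp] a r a0 bT ap pb ar rb p_r.
  move: pb => /= ab; rewrite -ab in rb.
  by rewrite (path_last_eq_head ar rb) riemann_sum_nil subrr normr0 incr_pow_sum_nil mulr0.
have xr : x \in r by apply: p_r; rewrite in_cons eqxx.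
move: ar rb p_r; case/splitPr: xr => r1 r2.
rewrite cat_path last_cat /= => /andP[ar1 /andP[r1x xr2]] r2b p_r.
move: ap pb => /= /andP[ax xp] pb.
have [xb _] := path_le_last xp; rewrite pb in xb.
have ar1x : path <%R a (rcons r1 x) by rewrite rcons_path ar1 r1x.
have p_r2 : {subset p <= r2}.
  move=> y yp; have xy := path_gt_head xp yp.
  have := p_r y; rewrite in_cons yp orbT mem_cat in_cons => /(_ isT).
  case/orP=> [yr1 | /orP[/eqP yx | //]]; last by move: xy; rewrite yx ltxx.
  have [_ /(_ y)] := path_le_last ar1x; rewrite last_rcons mem_rcons in_cons yr1 orbT.
  by move=> /(_ isT) /(lt_le_trans xy); rewrite ltxx.
have left := riemann_sum_germ_le a0 (le_trans xb bT) ar1x (last_rcons _ _ _).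
have right := IHp x r2 (le_trans a0 (ltW ax)) bT xp pb xr2 r2b p_r2.
rewrite -cat_rcons riemann_sum_cat last_rcons !riemann_sum_cons incr_pow_sum_cons mulrDr.
have -> : Xi a x + riemann_sum x p Xi - (riemann_sum a (rcons r1 x) Xi + riemann_sum x r2 Xi) =
    - (riemann_sum a (rcons r1 x) Xi - Xi a x) + (riemann_sum x p Xi - riemann_sum x r2 Xi).
  by zmodule_eq.
by apply: le_trans (ler_normD _ _) _; rewrite normrN; exact: lerD.
Qed.

Lemma riemann_sum_cauchy a b e : 0 <= a -> b <= T -> 0 < e ->
  exists2 d, 0 < d & forall p p', is_partition a b p -> mesh_lt a p d ->
    is_partition a b p' -> mesh_lt a p' d ->
    `|riemann_sum a p Xi - riemann_sum a p' Xi| < e.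
Proof.
move=> a0 bT e0; set c := 2 * K * `|b - a| + 1; set x := e / c.
have c0 : 0 < c by rewrite ltr_wpDl // mulr_ge0 // mulr_ge0 // K_ge0.
have x0 : 0 < x by rewrite divr_gt0.
exists (x `^ (th - 1)^-1) => [|p p' /andP[ap /eqP pb] p_mesh /andP[ap' /eqP p'b] p'_mesh].
  by rewrite powR_gt0.
have mesh_pow : (x `^ (th - 1)^-1) `^ (th - 1) = x.
  by rewrite -powRrM mulVf ?powRr1 ?ltW // gt_eqF // subr_gt0.
have K_incr r' : path <%R a r' -> last a r' = b -> mesh_lt a r' (x `^ (th - 1)^-1) ->
    K * incr_pow_sum th a r' <= K * x * `|b - a|.
  move=> ar' r'b r'_mesh; rewrite -mulrA (ler_wpM2l K_ge0) //.
  have := incr_pow_sum_le_mesh (ltW th_gt1) ar' r'_mesh; rewrite r'b mesh_pow => /le_trans.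
  by apply; rewrite ler_wpM2l ?ler_norm // ltW.
have [r [ar rb p_r p'_r]] := common_refinement ap pb ap' p'b.
have := riemann_sum_refine_le a0 bT ap pb ar rb p_r.
have := riemann_sum_refine_le a0 bT ap' p'b ar rb p'_r.
have := K_incr p ap pb p_mesh; have := K_incr p' ap' p'b p'_mesh.
have : e = 2 * (K * x * `|b - a|) + x by rewrite -(divfK (lt0r_neq0 c0) e) -/x /c; ring.
have -> : riemann_sum a p Xi - riemann_sum a p' Xi =
    (riemann_sum a p Xi - riemann_sum a r Xi) - (riemann_sum a p' Xi - riemann_sum a r Xi).
  by zmodule_eq.
move: (ler_normB (riemann_sum a p Xi - riemann_sum a r Xi)
  (riemann_sum a p' Xi - riemann_sum a r Xi)) x0.
set N := `|_ - _|; set Z := K * x * _; set P := K * incr_pow_sum th a p.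
set P' := K * incr_pow_sum th a p'; lra.
Qed.

End Sewing.

Section SewingLemma.
Local Open Scope classical_set_scope.

Lemma sewing_lemma (R : realType) (W : completeNormedModType R) (Xi : R -> R -> W)
    (T th K0 a b : R) :
  1 < th -> 0 <= K0 ->
  (forall s u t, 0 <= s -> s <= u -> u <= t -> t <= T ->
    `|Xi s t - Xi s u - Xi u t| <= K0 * (t - s) `^ th) ->
  0 <= a -> a <= b -> b <= T ->
  exists I : W, forall e : R, 0 < e -> exists d : R, 0 < d /\
    forall p : seq R, is_partition a b p -> mesh_lt a p d ->
      `|riemann_sum a p Xi - I| < e.
Proof.
move=> th_gt1 K0_ge0 Xi_cob a0 ab bT.
have cauchy := riemann_sum_cauchy th_gt1 K0_ge0 Xi_cob a0 bT.
pose mesh (n : nat) : R := n.+1%:R^-1.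
have mesh_gt0 n : 0 < mesh n by rewrite invr_gt0 ltr0n.
have mesh_le n m : (n <= m)%N -> mesh m <= mesh n.
  by move=> nm; rewrite lef_pV2 ?posrE ?ltr0n // ler_nat ltnS.
have mesh_small d : 0 < d -> exists N, mesh N < d.
  by exists (Num.truncn d^-1); rewrite /mesh invf_plt ?posrE ?ltr0n // truncnS_gt.
have [P P_part] := choice (fun n => exists_partition_mesh_lt ab (mesh_gt0 n)).
pose u n := riemann_sum a (P n) Xi.
have u_close e : 0 < e -> exists N, forall n p, (N <= n)%N ->
    is_partition a b p -> mesh_lt a p (mesh N) -> `|riemann_sum a p Xi - u n| < e.
  move=> /cauchy[d d0 close]; have [N mesh_N] := mesh_small d d0.
  exists N => n p Nn p_part p_mesh; have /andP[Pn_part Pn_mesh] := P_part n.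
  apply: close => //; first exact: mesh_lt_le (ltW mesh_N) p_mesh.
  exact: mesh_lt_le (le_trans (mesh_le _ _ Nn) (ltW mesh_N)) Pn_mesh.
have u_cvg : cvg (u @ \oo).
  apply/cauchy_cvgP/cauchyP => e /u_close[N close]; exists (u N), N => // n /= Nn.
  have /andP[Pn_part Pn_mesh] := P_part n.
  rewrite -ball_normE /= distrC.
  exact: close N (P n) (leqnn N) Pn_part (mesh_lt_le (mesh_le _ _ Nn) Pn_mesh).
exists (lim (u @ \oo)) => e e0.
have [N close] := u_close (e / 2) (divr_gt0 e0 (ltr0Sn _ 1)).
have [N' _ u_near] := proj1 (cvgrPdist_lt _ _) u_cvg _ (divr_gt0 e0 (ltr0Sn _ 1)).
exists (mesh N); split=> // p p_part p_mesh.
have := close (maxn N N') p (leq_maxl _ _) p_part p_mesh.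
have := u_near (maxn N N') (leq_maxr _ _).
have -> : riemann_sum a p Xi - lim (u @ \oo) =
    (riemann_sum a p Xi - u (maxn N N')) - (lim (u @ \oo) - u (maxn N N')) by zmodule_eq.
by move=> ? ?; apply: le_lt_trans (ler_normB _ _) _; lra.
Qed.

End SewingLemma.

Theorem theorem3p2
  (R : realType) (V W V2 V3 : completeNormedModType R)
  (t2 : V -> V -> V2) (t3 : V -> V -> V -> V3)
  (Ht2 : proj_tensor2 t2) (Ht3 : proj_tensor3 t3)
  (Sym2 : V2 -> V2) (Sym3 : V3 -> V3)
  (HSym2 : [/\ is_lin Sym2, continuous Sym2 &
             forall a b, Sym2 (t2 a b) = 2^-1 *: (t2 a b + t2 b a)])
  (HSym3 : [/\ is_lin Sym3, continuous Sym3 &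
             forall a b c, Sym3 (t3 a b c) =
               6^-1 *: (t3 a b c + t3 a c b + t3 b a c + t3 b c a + t3 c a b + t3 c b a)])
  (m12 : V -> V2 -> V3) (m21 : V2 -> V -> V3)
  (Hm12 : forall a, [/\ is_lin (m12 a), continuous (m12 a) &
                        forall b c, m12 a (t2 b c) = t3 a b c])
  (Hm21 : forall c, [/\ is_lin (m21^~ c), continuous (m21^~ c) &
                        forall a b, m21 (t2 a b) c = t3 a b c])
  (T alpha : R) (HT : 0 < T) (Halpha : 4^-1 < alpha <= 3^-1)
  (F : V -> W) (D1 : V -> V -> W) (D2 : V -> V -> V -> W)
  (D3 : V -> V -> V -> V -> W) (D4 : V -> V -> V -> V -> V -> W)
  (HF : C4b_derivs F D1 D2 D3 D4)
  (L2 : V -> V2 -> W) (L3 : V -> V3 -> W)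
  (HL2 : forall x, [/\ is_lin (L2 x), continuous (L2 x) &
                      forall a b, L2 x (t2 a b) = D2 x a b])
  (HL3 : forall x, [/\ is_lin (L3 x), continuous (L3 x) &
                      forall a b c, L3 x (t3 a b c) = D3 x a b c])
  (X : R -> V) (A : R -> R -> V2) (B : R -> R -> V3)
  (HAsym : forall s t, 0 <= s <= T -> 0 <= t <= T -> Sym2 (A s t) = A s t)
  (HBsym : forall s t, 0 <= s <= T -> 0 <= t <= T -> Sym3 (B s t) = B s t)
  (HchenA : forall s u t, 0 <= s <= T -> 0 <= u <= T -> 0 <= t <= T ->
     A s t - A s u - A u t = Sym2 (t2 (X u - X s) (X t - X u)))
  (HchenB : forall s u t, 0 <= s <= T -> 0 <= u <= T -> 0 <= t <= T ->
     B s t - B s u - B u t = Sym3 (m12 (X u - X s) (A u t) + m21 (A s u) (X t - X u)))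
  (Hhold : exists K : R, forall s t, 0 <= s <= T -> 0 <= t <= T ->
     [/\ `|X t - X s| <= K * `|t - s| `^ alpha,
         `|A s t| <= K * `|t - s| `^ (2 * alpha) &
         `|B s t| <= K * `|t - s| `^ (3 * alpha)])
  (C : R)
  (Hbr1 : forall s t, 0 <= s <= T -> 0 <= t <= T ->
     `|t2 (X t - X s) (X t - X s) - 2 *: A s t| <= C * `|t - s| `^ (3 * alpha))
  (Hbr2 : forall s t, 0 <= s <= T -> 0 <= t <= T ->
     `|t3 (X t - X s) (X t - X s) (X t - X s) - 6 *: B s t|
        <= C * `|t - s| `^ (3 * alpha)) :
  forall t, 0 <= t <= T ->
  exists I : W, forall e : R, 0 < e -> exists d : R, 0 < d /\
    forall p : seq R, is_partition 0 t p -> mesh_lt 0 p d ->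
      `|riemann_sum 0 p (fun u v =>
          D1 (X u) (X v - X u) + L2 (X u) (A u v) + L3 (X u) (B u v)) - I| < e.
Proof.
move=> t /andP[t0 tT].
have [_ _ [M [F_le _ _ D3_le D4_le]]] := HF.
have M0 : 0 <= M := le_trans (normr_ge0 _) (F_le 0).
have [K holder] := Hhold.
have alpha_ge0 : 0 <= alpha by lra.
have th_gt1 : 1 < 4 * alpha by lra.
apply: (sewing_lemma th_gt1 _ (germ_coboundary_holder Ht2 Ht3 HSym2 HSym3 Hm12 Hm21
  HF M0 D3_le D4_le HL2 HL3 alpha_ge0 HchenA HchenB holder Hbr1) (lexx 0) t0 tT).
by rewrite mulr_ge0 // !addr_ge0 ?mulr_ge0 ?exprn_ge0.
Qed.
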